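(* Let $\Sigma=\{c_1\prec c_2\prec\dots\prec c_\sigma\}$, let $n\ge1$ and nonnegative integers $n_c$ ($c\in\Sigma$) with $\sum_c n_c=n-1$ be given, and let $\mathcal U$, $\mathcal M$, $f$ be as in the context. A binary matrix $M\in\mathcal M$ belongs to $f(\mathcal U)$ if and only if its associated sequence $\mathcal L$ is a Łukasiewicz path.
   Context: A trie over a finite totally ordered alphabet $\Sigma$ of size $\sigma$ is a rooted ordered tree with edges labeled by symbols of $\Sigma$ such that edges leaving the same node have distinct labels and siblings are ordered by their incoming labels. For a node $u$, $out(u)\subseteq\Sigma$ is the set of labels of edges leaving $u$. $\mathcal U$ is the set of tries with $n$ nodes over $\Sigma$ in which exactly $n_c$ edges are labeled $c$, for each $c$. $\mathcal M$ is the set of all $\sigma\times n$ binary matrices $M$ such that, for every $i\in[\sigma]$, row $i$ of $M$ contains exactly $n_{c_i}$ ones. The map $f:\mathcal U\to\mathcal M$ sends a trie with nodes $u_1,\dots,u_n$ listed in pre-order (children visited in increasing label order) to the matrix $M$ with $M[i][j]=1$ iff $c_i\in out(u_j)$. For $M\in\mathcal M$, define integer sequences of length $n$ by $\mathcal D[i]=(\text{number of ones in column } i \text{ of } M)-1$ and $\mathcal L[i]=\sum_{j=1}^i\mathcal D[j]$. A Łukasiewicz path is an integer sequence $\mathcal L[1..n]$ with $\mathcal L[n]=-1$ and, for every $i\in[n-1]$, $\mathcal L[i]\ge 0$ and $\mathcal L[i+1]-\mathcal L[i]\ge -1$. *)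

From HB Require Import structures.
From mathcomp Require Import all_boot all_order all_algebra.
Set Implicit Arguments. Unset Strict Implicit. Unset Printing Implicit Defensive.
Import Order.TTheory GRing.Theory Num.Theory.

(* Alphabet Sigma = {c_1 < ... < c_sigma} is represented by 'I_sigma
   (c_{i+1} is the ordinal i), ordered by the natural order. *)

Inductive trie (sigma : nat) : Type :=
  Node : seq ('I_sigma * trie sigma) -> trie sigma.

Arguments Node {sigma}.

Definition children {sigma} (t : trie sigma) : seq ('I_sigma * trie sigma) :=
  let: Node cs := t in cs.

Definition out {sigma} (t : trie sigma) : seq 'I_sigma := map fst (children t).

Fixpoint wf_trie {sigma} (t : trie sigma) : bool :=
  let: Node cs := t in
  sorted (fun a b : 'I_sigma => (a < b)%N) (map fst cs) &&
  (fix aux (l : seq ('I_sigma * trie sigma)) : bool :=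
     match l with [::] => true | (_, u) :: l' => wf_trie u && aux l' end) cs.

(* Pre-order list of nodes (children visited in list order, which for
   well-formed tries is increasing label order). *)
Fixpoint preorder {sigma} (t : trie sigma) : seq (trie sigma) :=
  let: Node cs := t in
  t :: (fix aux (l : seq ('I_sigma * trie sigma)) : seq (trie sigma) :=
          match l with [::] => [::] | (_, u) :: l' => preorder u ++ aux l' end) cs.

Definition edge_count {sigma} (t : trie sigma) (c : 'I_sigma) : nat :=
  \sum_(u <- preorder t) (c \in out u).

Definition in_U {sigma} (n : nat) (cnt : 'I_sigma -> nat) (t : trie sigma) : Prop :=
  [/\ wf_trie t, size (preorder t) = n & forall c, edge_count t c = cnt c].

Definition in_M {sigma n} (cnt : 'I_sigma -> nat) (M : 'M[bool]_(sigma, n)) : Prop :=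
  forall i : 'I_sigma, \sum_(j < n) (M i j : nat) = cnt i.

Definition f_trie {sigma} (n : nat) (t : trie sigma) : 'M[bool]_(sigma, n) :=
  \matrix_(i < sigma, j < n) (i \in out (nth (Node [::]) (preorder t) j)).

(* D[j] (0-indexed column j, i.e. paper's D[j+1]) *)
Definition Dseq {sigma n} (M : 'M[bool]_(sigma, n)) (j : 'I_n) : int :=
  (\sum_(i < sigma) (M i j : nat))%:Z - 1.

(* L[k] = sum_{j=1}^k D[j], for k = 1..n (paper's 1-based indexing) *)
Definition Lseq {sigma n} (M : 'M[bool]_(sigma, n)) (k : nat) : int :=
  \sum_(j < n | (j < k)%N) Dseq M j.

Definition lukasiewicz (n : nat) (L : nat -> int) : Prop :=
  L n = (-1)%R /\
  forall i : nat, (1 <= i <= n - 1)%N -> (0 <= L i)%R /\ (-1 <= L i.+1 - L i)%R.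

From mathcomp Require Import all_boot all_order all_algebra zify.

Set Implicit Arguments.
Unset Strict Implicit.
Unset Printing Implicit Defensive.

Import GRing.Theory Num.Theory.

(* Reading the out-degrees of a trie in pre-order is a stack machine: it starts
   with one pending subtree, and each node consumes one pending subtree and
   opens as many new ones as its degree, so L[k] + 1 is the number of pending
   subtrees after k nodes.  Hence the column sums of f(t) form such a "forest
   code", which amounts to L staying nonnegative and ending at -1.  Conversely
   a forest code splits into the codes of the subtrees of the root, so it can
   be decoded into a trie; labelling the edges of the node of column j by the
   (sorted) rows of the ones of that column makes the trie well formed, and f
   maps it back to M. *)

Section Tries.
Variable sigma : nat.
Implicit Types (t u : trie sigma) (cs : seq ('I_sigma * trie sigma)).
Local Notation ltI := (fun a b : 'I_sigma => (a < b)%N).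

Lemma trie_nested_ind (P : trie sigma -> Prop) :
  (forall cs, (forall p, List.In p cs -> P p.2) -> P (Node cs)) -> forall t, P t.
Proof.
move=> IH; fix F 1 => -[cs]; apply: IH.
exact: (fix G (l : seq ('I_sigma * trie sigma)) : forall p, List.In p l -> P p.2 :=
  match l with
  | [::] => fun p (in_nil : List.In p [::]) => False_ind _ in_nil
  | (a, u) :: l' => fun p in_l =>
      match in_l with
      | or_introl e => eq_ind (a, u) (fun q => P q.2) (F u) p e
      | or_intror in_l' => G l' p in_l'
      end
  end) cs.
Qed.

Lemma wf_trie_Node cs :
  wf_trie (Node cs) = sorted ltI (map fst cs) && all (fun p => wf_trie p.2) cs.
Proof. by rewrite /=; congr (_ && _); elim: cs => //= [[a u] l ->]. Qed.

Lemma preorder_Node cs :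
  preorder (Node cs) = Node cs :: flatten [seq preorder p.2 | p <- cs].
Proof. by rewrite /=; congr (_ :: _); elim: cs => //= [[a u] l ->]. Qed.

Lemma sorted_out u : wf_trie u -> sorted ltI (out u).
Proof. by case: u => cs; rewrite wf_trie_Node => /andP[]. Qed.

Lemma wf_trie_preorder t : wf_trie t -> all wf_trie (preorder t).
Proof.
elim/trie_nested_ind: t => cs IH wf_cs; rewrite preorder_Node -cat1s all_cat all_seq1 wf_cs /=.
move: wf_cs; rewrite wf_trie_Node => /andP[_].
elim: cs IH => [|p cs IHcs] IH // /andP[wf_p wf_cs].
rewrite map_cons [flatten _]/= all_cat (IH p (or_introl erefl) wf_p).
by apply: IHcs wf_cs => q in_q; apply: IH q (or_intror in_q).
Qed.

End Tries.

(* [forest_code m ds]: [ds] is the pre-order degree sequence of a sequence of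
   [m] ordered trees; [m] counts the subtrees still to be read. *)
Fixpoint forest_code (m : nat) (ds : seq nat) : bool :=
  if ds is d :: ds' then (0 < m) && forest_code (m.-1 + d) ds' else m == 0.

Lemma forest_code_split (T : Type) (g : T -> nat) (s : seq T) k m :
  forest_code (k + m) (map g s) ->
  exists s1 s2, [/\ s = s1 ++ s2, forest_code k (map g s1) & forest_code m (map g s2)].
Proof.
elim: s k m => [|x s IH] [|k] m /=.
- by case: m => // _; exists [::], [::].
- by [].
- by move=> code_s; exists [::], (x :: s).
by rewrite addnAC => /IH[s1 [s2 [-> code1 code2]]]; exists (x :: s1), s2.
Qed.

Section ForestCodes.
Variable sigma : nat.
Local Notation ltI := (fun a b : 'I_sigma => (a < b)%N).

Lemma forest_code_preorder_cat (t : trie sigma) m rest :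
  forest_code m.+1 ([seq size (out u) | u <- preorder t] ++ rest) = forest_code m rest.
Proof.
elim/trie_nested_ind: t m rest => cs IH m rest.
rewrite preorder_Node /= size_map map_flatten -map_comp.
elim: cs IH m => [|p cs IHcs] IH m /=; first by rewrite addn0.
by rewrite addnS -catA (IH p (or_introl erefl)) IHcs // => q in_q; apply: IH q (or_intror in_q).
Qed.

Lemma forest_code_preorder (t : trie sigma) :
  forest_code 1 (map size (map out (preorder t))).
Proof. by rewrite -map_comp -[map _ _]cats0 forest_code_preorder_cat. Qed.

Lemma forest_code_realize (ls : seq (seq 'I_sigma)) m :
  all (sorted ltI) ls -> forest_code m (map size ls) ->
  exists ts : seq (trie sigma),
    [/\ size ts = m, all wf_trie ts & flatten [seq map out (preorder t) | t <- ts] = ls].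
Proof.
elim: {ls}(size ls).+1 {-2}ls (ltnSn (size ls)) m => [|N IH] ls; first by rewrite ltn0.
move=> size_ls [|m] sorted_ls.
  by case: ls {size_ls sorted_ls} => //= _; exists [::].
rewrite -add1n => /forest_code_split[[|l s1] [s2 [def_ls //= code1 code2]]].
move: sorted_ls size_ls; rewrite def_ls all_cat /= size_cat /=.
move=> /andP[/andP[sorted_l sorted1] sorted2] size_ls.
have [cs [size_cs wf_cs out_cs]] := IH s1 ltac:(lia) _ sorted1 code1.
have [ts [size_ts wf_ts out_ts]] := IH s2 ltac:(lia) _ sorted2 code2.
have size_l : size l = size cs by rewrite size_cs.
have unzip1_lcs : unzip1 (zip l cs) = l by rewrite unzip1_zip ?size_l.
have unzip2_lcs : unzip2 (zip l cs) = cs by rewrite unzip2_zip ?size_l.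
exists (Node (zip l cs) :: ts); split.
- by rewrite /= size_ts.
- rewrite -cat1s all_cat all_seq1 wf_ts andbT wf_trie_Node -/(unzip1 _) unzip1_lcs sorted_l.
  by rewrite -unzip2_lcs all_map in wf_cs.
- rewrite map_cons preorder_Node /= -[out _]/(unzip1 (zip l cs)) unzip1_lcs out_ts -out_cs.
  by rewrite map_flatten -map_comp -[in RHS]unzip2_lcs /unzip2 -map_comp.
Qed.

Lemma trie_realize (ls : seq (seq 'I_sigma)) :
  all (sorted ltI) ls -> forest_code 1 (map size ls) ->
  exists2 t : trie sigma, wf_trie t & map out (preorder t) = ls.
Proof.
move=> sorted_ls /(forest_code_realize sorted_ls)[[|t [|? ?]] [] //= _].
by rewrite andbT cats0; exists t.
Qed.

End ForestCodes.

Local Open Scope ring_scope.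

Definition luk_path (ds : seq nat) (k : nat) : int :=
  \sum_(0 <= j < k) ((nth 0%N ds j)%:Z - 1).

Lemma luk_path0 ds : luk_path ds 0 = 0.
Proof. by rewrite /luk_path big_geq. Qed.

Lemma luk_path_cons d ds k : luk_path (d :: ds) k.+1 = (d%:Z - 1) + luk_path ds k.
Proof. by rewrite /luk_path big_nat_recl. Qed.

Lemma luk_pathS ds k : luk_path ds k.+1 = luk_path ds k + ((nth 0%N ds k)%:Z - 1).
Proof. by rewrite /luk_path big_nat_recr. Qed.

Lemma forest_codeP m ds :
  reflect (m%:Z + luk_path ds (size ds) = 0 /\
           forall k, (k < size ds)%N -> 0 < m%:Z + luk_path ds k)
          (forest_code m ds).
Proof.
elim: ds m => [|d ds IH] m /=.
  rewrite luk_path0; apply: (iffP eqP) => [-> | [m0 _]]; last lia.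
  by split=> // k; rewrite ltn0.
apply: (iffP andP) => [[m_gt0 /IH[end_ds pos_ds]] | [end_ds pos_ds]].
  split=> [|[|k] k_lt]; rewrite ?luk_path0 ?luk_path_cons; first by move: end_ds; lia.
    by lia.
  by have := pos_ds k k_lt; lia.
have m_gt0 : (0 < m)%N by have := pos_ds 0%N erefl; rewrite luk_path0; lia.
split=> //; apply/IH; split=> [|k k_lt].
  by move: end_ds; rewrite luk_path_cons; lia.
by have := pos_ds k.+1 k_lt; rewrite luk_path_cons; lia.
Qed.

Lemma lukasiewicz_forest_code n ds (L : nat -> int) :
  size ds = n -> (0 < n)%N -> (forall k, (k <= n)%N -> L k = luk_path ds k) ->
  lukasiewicz n L <-> forest_code 1 ds.
Proof.
move=> <- n_gt0 L_ds; split=> [[L_end L_step] | /forest_codeP[end_ds pos_ds]].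
  apply/forest_codeP; split; first by rewrite -L_ds // L_end.
  case=> [|k] k_lt; first by rewrite luk_path0.
  by have [L_ge0 _] := L_step k.+1 ltac:(lia); rewrite -L_ds //; lia.
split=> [|i i_bnd]; first by rewrite L_ds //; lia.
rewrite !L_ds; [|lia|lia]; split; first by have := pos_ds i ltac:(lia); lia.
by rewrite luk_pathS; lia.
Qed.

Section Columns.
Variables (sigma n : nat) (M : 'M[bool]_(sigma, n)).
Local Notation ltI := (fun a b : 'I_sigma => (a < b)%N).

Lemma sorted_enum_ord : sorted ltI (enum 'I_sigma).
Proof. by have := iota_ltn_sorted 0 sigma; rewrite -val_enum_ord sorted_map. Qed.

Lemma filter_enum_sorted (s : seq 'I_sigma) :
  sorted ltI s -> [seq i <- enum 'I_sigma | i \in s] = s.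
Proof.
move=> sorted_s; apply: (irr_sorted_eq (leT := fun a b : 'I_sigma => (a < b)%N)).
- exact: ltn_trans.
- exact: ltnn.
- by apply: sorted_filter; [exact: ltn_trans | exact: sorted_enum_ord].
- exact: sorted_s.
- by move=> i; rewrite mem_filter mem_enum andbT.
Qed.

Definition col_labels : seq (seq 'I_sigma) :=
  [seq [seq i <- enum 'I_sigma | M i j] | j <- enum 'I_n].

Lemma size_col_labels : size col_labels = n.
Proof. by rewrite size_map size_enum_ord. Qed.

Lemma nth_col_labels (j : 'I_n) : nth [::] col_labels j = [seq i <- enum 'I_sigma | M i j].
Proof. by rewrite (nth_map j) ?size_enum_ord // nth_ord_enum. Qed.

Lemma mem_nth_col_labels (i : 'I_sigma) (j : 'I_n) : (i \in nth [::] col_labels j) = M i j.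
Proof. by rewrite nth_col_labels mem_filter mem_enum andbT. Qed.

Lemma size_nth_col_labels (j : 'I_n) :
  size (nth [::] col_labels j) = (\sum_(i < sigma) M i j)%N.
Proof.
rewrite nth_col_labels size_filter -sum1_count big_mkcond /= enumT.
by apply: eq_bigr => i _; case: (M i j).
Qed.

Lemma sorted_col_labels : all (sorted ltI) col_labels.
Proof.
apply/allP => _ /mapP[j _ ->].
by apply: sorted_filter; [exact: ltn_trans | exact: sorted_enum_ord].
Qed.

Lemma Lseq_luk_path k : (k <= n)%N -> Lseq M k = luk_path (map size col_labels) k.
Proof.
move=> k_le; rewrite /Lseq /luk_path (big_nat_widen _ _ _ _ _ k_le) big_mkord.
by apply: eq_bigr => j _; rewrite (nth_map [::]) ?size_col_labels // size_nth_col_labels.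
Qed.

Lemma sum_mem_col_labels (i : 'I_sigma) :
  (\sum_(s <- col_labels) (i \in s) = \sum_(j < n) M i j)%N.
Proof.
rewrite big_map enumT; apply: eq_bigr => j _.
by rewrite mem_filter mem_enum andbT.
Qed.

End Columns.

Lemma f_trie_col_labels sigma n (t : trie sigma) (M : 'M[bool]_(sigma, n)) :
  map out (preorder t) = col_labels M -> f_trie n t = M.
Proof.
move=> out_t; apply/matrixP => i j; rewrite mxE -mem_nth_col_labels -out_t.
by rewrite (nth_map (Node [::])) // -(size_map out) out_t size_col_labels.
Qed.

Lemma col_labels_f_trie sigma n (t : trie sigma) :
  wf_trie t -> size (preorder t) = n -> col_labels (f_trie n t) = map out (preorder t).
Proof.
move=> wf_t size_t; apply: (eq_from_nth (x0 := [::])).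
  by rewrite size_map size_col_labels.
rewrite size_col_labels => j j_lt; rewrite -[j]/(nat_of_ord (Ordinal j_lt)) nth_col_labels.
rewrite (nth_map (Node [::])) ?size_t //; under eq_filter do rewrite mxE.
apply/filter_enum_sorted/sorted_out.
by apply: (all_nthP _ (wf_trie_preorder wf_t)); rewrite size_t.
Qed.

Theorem lemma2 (sigma n : nat) (cnt : 'I_sigma -> nat)
  (Hn : (1 <= n)%N) (Hsum : (\sum_(c < sigma) cnt c)%N = (n - 1)%N)
  (M : 'M[bool]_(sigma, n)) (HM : in_M cnt M) :
  (exists t : trie sigma, in_U n cnt t /\ f_trie n t = M) <-> lukasiewicz n (Lseq M).
Proof.
have size_degs : size (map size (col_labels M)) = n by rewrite size_map size_col_labels.
rewrite (lukasiewicz_forest_code size_degs Hn (Lseq_luk_path M)).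
split=> [[t [[wf_t size_t _] <-]] | code_M].
  by rewrite col_labels_f_trie // forest_code_preorder.
have [t wf_t out_t] := trie_realize (sorted_col_labels M) code_M.
exists t; split; last exact: f_trie_col_labels.
split=> // [|c]; first by rewrite -(size_map out) out_t size_col_labels.
rewrite /edge_count -(big_map out predT (fun s => nat_of_bool (c \in s))) out_t.
by rewrite sum_mem_col_labels HM.
Qed.
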